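(* Let $\{P_v\}_{v\in\mathcal{V}}$ be a family of distributions indexed by $\mathcal{V}=\{0,1\}^\infty$, let $\alpha\in[0,1)$, and let $\hat V$ be an $(\alpha,\{n_k\})$-test sequence for this family. Then for all $v\in\mathcal{V}$, $$\sum_{k=1}^\infty\mathsf{CondErr}(\hat V,v,k)\le\frac{\alpha}{1-\alpha}.$$
   Context: $\mathbb{P}_v$ denotes the probability under which $X_1,X_2,\dots$ are i.i.d. $P_v$. A sequence of $\{0,1\}$-valued tests $\{\hat V_k\}$, $\hat V_k$ a function of $X_{1:n_k}$, is an $(\alpha,\{n_k\})$-test if for all $v\in\mathcal{V}$, $\mathbb{P}_v(\hat V_k(X_{1:n_k})=v_k\text{ for all }k\in\mathbb{N})\ge1-\alpha$. $\mathsf{CondErr}(\hat V,v,k):=\mathbb{P}_v(\hat V_k\ne v_k\mid\hat V_{1:k-1}=v_{1:k-1})$, where $v_{1:k-1}=(v_1,\dots,v_{k-1})$. *)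

From HB Require Import structures.
From mathcomp Require Import all_boot all_order all_algebra.
From mathcomp Require Import all_classical all_reals all_analysis.
Set Implicit Arguments. Unset Strict Implicit. Unset Printing Implicit Defensive.
Import Order.TTheory GRing.Theory Num.Theory.
Local Open Scope classical_set_scope.
Local Open Scope ring_scope.

Section Defs.
Context {d dX : measure_display} {Omega : measurableType d}
  {X : measurableType dX} {R : realType}.

(* X_{1:n}(omega) : the first n observations (indices 0..n-1). *)
Definition window (Xs : nat -> Omega -> X) (n : nat) (w : Omega) : 'I_n -> X :=
  fun i => Xs (nat_of_ord i) w.

Definition iid_under (Q : probability Omega R) (Xs : nat -> Omega -> X)
  (P : probability X R) : Prop :=
  (forall i, measurable_fun setT (Xs i)) /\
  forall (n : nat) (A : nat -> set X), (forall i, measurable (A i)) ->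
    Q (\bigcap_(i in `I_n) (Xs i @^-1` A i)) = (\prod_(i < n) P (A i))%E.

Definition test_at (nk : nat -> nat) (V : forall k : nat, ('I_(nk k) -> X) -> bool)
  (Xs : nat -> Omega -> X) (k : nat) (w : Omega) : bool :=
  V k (@window Xs (nk k) w).

Definition is_alpha_test (Q : (nat -> bool) -> probability Omega R)
  (alpha : R) (nk : nat -> nat) (V : forall k : nat, ('I_(nk k) -> X) -> bool)
  (Xs : nat -> Omega -> X) : Prop :=
  forall v : nat -> bool,
    ((1 - alpha)%:E <= Q v [set w | forall k, test_at V Xs k w = v k])%E.

Definition CondErr (Q : probability Omega R)
  (nk : nat -> nat) (V : forall k : nat, ('I_(nk k) -> X) -> bool)
  (Xs : nat -> Omega -> X) (v : nat -> bool) (k : nat) : R :=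
  let B := [set w | forall j, (j < k)%N -> test_at V Xs j w = v j] in
  fine (Q ([set w | test_at V Xs k w != v k] `&` B)) / fine (Q B).

End Defs.

From HB Require Import structures.
From mathcomp Require Import all_boot all_order all_algebra.
From mathcomp Require Import all_classical all_reals all_analysis.
From mathcomp Require Import lra.
Import Order.TTheory GRing.Theory Num.Theory.
Local Open Scope classical_set_scope.
Local Open Scope ring_scope.

(** Let [E_k] be the event that test [k] is correct and [B_k] the event that
    the first [k] tests are.  Then [B_0] is sure, [B_(k+1) = B_k /\ E_k], and
    every [B_k] contains the event that all tests are correct, so
    [P(B_k) >= 1 - alpha].  The masses [P(B_k \ E_k)] leaving the chain
    telescope to [1 - P(B_n) <= alpha]; dividing each by [P(B_k) >= 1 - alpha]
    turns it into the conditional error and the total into [alpha / (1 - alpha)]. *)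

Lemma bigcap_ltnS (T : Type) (E : nat -> set T) (k : nat) :
  \bigcap_(j < k.+1) E j = \bigcap_(j < k) E j `&` E k.
Proof. by rewrite IIS bigcap_setU bigcap_set1. Qed.

Lemma measurable_eqb d (T : measurableType d) (f : T -> bool) (b : bool) :
  measurable [set w | f w] -> measurable [set w | f w = b].
Proof.
case: b => // mf; rewrite (_ : [set w | f w = false] = ~` [set w | f w]).
  exact: measurableC.
by apply/seteqP; split=> w /=; case: (f w).
Qed.

Section exits_from_a_chain_of_events.
Context d (T : measurableType d) (R : realType) (mu : probability T R).
Variable E : nat -> set T.
Hypothesis mE : forall k, measurable (E k).

Local Notation p A := (fine (mu A)).
Local Notation B k := (\bigcap_(j < k) E j).

Let mB k : measurable (B k).
Proof.
elim: k => [|k IHk]; first by rewrite II0 bigcap_set0.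
by rewrite bigcap_ltnS; exact: measurableI.
Qed.

Let pE A : measurable A -> mu A = (p A)%:E.
Proof. by move=> mA; rewrite fineK // fin_num_measure. Qed.

Lemma prob_chain_split k : p (B k) = p (B k.+1) + p (B k `\` E k).
Proof.
rewrite (measureDI mu (mB k) (mE k)) fineD ?fin_num_measure //.
- by rewrite -bigcap_ltnS addrC.
- exact: measurableD.
- exact: measurableI.
Qed.

Lemma sum_prob_chain_exits n : \sum_(0 <= k < n) p (B k `\` E k) = 1 - p (B n).
Proof.
elim: n => [|n IHn].
  by rewrite big_geq // II0 bigcap_set0 probability_setT subrr.
by rewrite big_nat_recr //= IHn (prob_chain_split n); lra.
Qed.

Lemma cond_chain_exits_le (alpha : R) :
  alpha < 1 -> ((1 - alpha)%:E <= mu (\bigcap_k E k))%E ->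
  (\sum_(0 <= k <oo) (p (B k `\` E k) / p (B k))%:E <= (alpha / (1 - alpha))%:E)%E.
Proof.
move=> alpha_lt1 all_correct; have alpha1_gt0 : 0 < 1 - alpha by lra.
have pB_ge k : 1 - alpha <= p (B k).
  rewrite -lee_fin -pE //; apply: (le_trans all_correct).
  by apply: le_measure; rewrite ?inE //; [exact: bigcapT_measurable | move=> w + j _; apply].
have pB_gt0 k : 0 < p (B k) by exact: lt_le_trans (pB_ge k).
have exit_ge0 k : 0 <= p (B k `\` E k).
  by rewrite -lee_fin -pE ?measure_ge0 //; exact: measurableD.
apply: lime_le.
  by apply: is_cvg_nneseries => k _ _; rewrite lee_fin divr_ge0 // ltW.
apply: nearW => n; rewrite sumEFin lee_fin.
apply: (@le_trans _ _ (\sum_(0 <= k < n) p (B k `\` E k) / (1 - alpha))).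
  by apply: ler_sum => k _; rewrite ler_wpM2l // lef_pV2 ?posrE.
rewrite -mulr_suml sum_prob_chain_exits ler_pM2r ?invr_gt0 //.
by have := pB_ge n; lra.
Qed.

End exits_from_a_chain_of_events.

Theorem lemma6 (d dX : measure_display) (Omega : measurableType d)
  (X : measurableType dX) (R : realType)
  (P : (nat -> bool) -> probability X R)
  (Q : (nat -> bool) -> probability Omega R)
  (Xs : nat -> Omega -> X)
  (HQ : forall v, iid_under (Q v) Xs (P v))
  (alpha : R) (Ha0 : 0 <= alpha) (Ha1 : alpha < 1)
  (nk : nat -> nat) (V : forall k : nat, ('I_(nk k) -> X) -> bool)
  (Vmeas : forall k, measurable [set w | test_at V Xs k w])
  (HV : is_alpha_test Q alpha V Xs) :
  forall v : nat -> bool,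
    (\sum_(0 <= k <oo) (CondErr (Q v) V Xs v k)%:E <= (alpha / (1 - alpha))%:E)%E.
Proof.
(* Neither the i.i.d. structure [HQ] nor [0 <= alpha] is needed: the bound
   holds for any probability measure and any sequence of tests. *)
move=> v; pose E k := [set w | test_at V Xs k w = v k].
have mE k : measurable (E k) by exact: measurable_eqb.
have errE k : CondErr (Q v) V Xs v k =
    fine (Q v (\bigcap_(j < k) E j `\` E k)) / fine (Q v (\bigcap_(j < k) E j)).
  rewrite /CondErr setDE setIC; congr (fine (Q v (_ `&` _)) / _).
  by apply/seteqP; split=> w /= /eqP.
under eq_eseriesr do rewrite errE.
apply: cond_chain_exits_le => //.
suff -> : \bigcap_k E k = [set w | forall k, test_at V Xs k w = v k] by exact: HV.
by apply/seteqP; split=> w agree k; [exact: agree k I | move=> _; exact: agree].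
Qed.
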